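(* Let $\mathcal{I}$ be a set of $n$ intervals (circular arcs) on the unit circle, and let $G=(\mathcal{I},E)$ be the associated intersection graph. Then $|E|=O(\alpha\,\omega^2)$, where $\omega$ is the maximum depth of $\mathcal{I}$ and $\alpha$ is the size of the largest independent set in $G$. Furthermore, this upper bound on $|E|$ is tight (there are such families with $\Omega(\alpha\,\omega^2)$ edges).
   Context: The depth of a point of the circle is the number of intervals of $\mathcal{I}$ containing it; the maximum depth of $\mathcal{I}$ is the maximum depth over all points of the circle. Two intervals are adjacent in the intersection graph if they intersect. *)

From mathcomp Require Import all_boot all_order all_algebra.
From mathcomp Require Import boolp reals.
Set Implicit Arguments. Unset Strict Implicit. Unset Printing Implicit Defensive.
Import Order.TTheory GRing.Theory Num.Theory.
Local Open Scope ring_scope.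

(* The unit circle is identified with R/Z (angle / 2pi); its points are
   represented by reals x with 0 <= x < 1. *)
Definition circle_pt (R : realType) (x : R) : Prop := 0 <= x < 1.

(* A (closed) circular arc: it starts at angle [astart] and goes
   counterclockwise over length [alen]. *)
Record circ_arc (R : realType) := Arc { astart : R; alen : R }.

Definition wf_arc (R : realType) (A : circ_arc R) : Prop :=
  0 <= astart A < 1 /\ 0 < alen A < 1.

Definition in_arc (R : realType) (A : circ_arc R) (x : R) : Prop :=
  exists k : int, astart A <= x + k%:~R <= astart A + alen A.

Definition arcs_intersect (R : realType) (A B : circ_arc R) : Prop :=
  exists x, circle_pt x /\ in_arc A x /\ in_arc B x.

Definition depth (R : realType) (n : nat) (I : 'I_n -> circ_arc R) (x : R) : nat :=
  #|[set i : 'I_n | `[< in_arc (I i) x >]]|.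

Definition is_max_depth (R : realType) (n : nat) (I : 'I_n -> circ_arc R) (w : nat)
  : Prop :=
  (exists x, circle_pt x /\ depth I x = w) /\
  (forall x, circle_pt x -> (depth I x <= w)%N).

Definition num_edges (R : realType) (n : nat) (I : 'I_n -> circ_arc R) : nat :=
  #|[set p : 'I_n * 'I_n | (p.1 < p.2)%N && `[< arcs_intersect (I p.1) (I p.2) >]]|.

Definition independent (R : realType) (n : nat) (I : 'I_n -> circ_arc R)
  (S : {set 'I_n}) : Prop :=
  forall i j, i \in S -> j \in S -> i != j -> ~ arcs_intersect (I i) (I j).

Definition independence_number (R : realType) (n : nat) (I : 'I_n -> circ_arc R)
  : nat :=
  \max_(S : {set 'I_n} | `[< independent I S >]) #|S|.

(* Every edge joins two arcs one of which contains the starting point of the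
   other, and no point lies on more than omega arcs, so |E| <= 2 n omega.  At
   most omega arcs pass through 0; the others are ordinary intervals of [0, 1),
   and repeatedly taking the interval that ends first, together with the at
   most omega intervals through its right end, produces an independent set of
   size at least (n - omega) / omega.  Hence n <= omega (alpha + 1) and
   |E| <= 4 alpha omega^2.  For tightness, alpha disjoint clusters of omega
   nested arcs have depth omega, independence number alpha, and
   alpha omega (omega - 1) / 2 >= alpha omega^2 / 4 edges. *)

From mathcomp Require Import all_boot all_order all_algebra.
From mathcomp Require Import boolp reals.
From mathcomp Require Import zify lra.
Set Implicit Arguments. Unset Strict Implicit. Unset Printing Implicit Defensive.
Import Order.TTheory GRing.Theory Num.Theory.
Local Open Scope ring_scope.

Lemma card_set_pair_fst (T : finType) (P : T -> T -> bool) :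
  #|[set p : T * T | P p.1 p.2]| = (\sum_i #|[set j | P i j]|)%N.
Proof.
rewrite -sum1_card (eq_bigl (fun p : T * T => P p.1 p.2)) => [|p]; last by rewrite inE.
rewrite -(pair_big_dep xpredT P (fun _ _ => 1)) /=.
by apply: eq_bigr => i _; rewrite sum1_card; apply: eq_card => j; rewrite inE.
Qed.

Lemma card_set_pair_swap (T : finType) (P : T -> T -> bool) :
  #|[set p : T * T | P p.2 p.1]| = #|[set p : T * T | P p.1 p.2]|.
Proof.
have swapK : involutive (fun p : T * T => (p.2, p.1)) by case.
rewrite -(card_preimset _ (inv_inj swapK)).
by apply: eq_card => p; rewrite !inE.
Qed.

Section Arcs.
Variable R : realType.
Implicit Types (A B : circ_arc R) (x : R).

Definition arc_end A := astart A + alen A.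

Definition nonwrapping_arc A := 0 <= astart A /\ arc_end A < 1.

Lemma wf_arc_start_pt A : wf_arc A -> circle_pt (astart A).
Proof. by case. Qed.

Lemma nonwrapping_arc_end_pt A : wf_arc A -> nonwrapping_arc A -> circle_pt (arc_end A).
Proof.
move=> [_ /andP[l_gt0 _]] [s_ge0 e_lt1].
by rewrite /circle_pt /arc_end in e_lt1 *; apply/andP; split; lra.
Qed.

Lemma in_arc_end A : wf_arc A -> in_arc A (arc_end A).
Proof.
by move=> [_ /andP[l_gt0 _]]; exists 0; rewrite addr0 /arc_end lexx andbT; lra.
Qed.

Lemma arcs_intersect_sym A B : arcs_intersect A B -> arcs_intersect B A.
Proof. by move=> [x [x_pt [xA xB]]]; exists x. Qed.

Lemma arcs_intersect_start A B :
  arcs_intersect A B -> in_arc B (astart A) \/ in_arc A (astart B).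
Proof.
move=> [x [_ [[k /andP[kA1 kA2]] [m /andP[mB1 mB2]]]]].
have [le|lt] := lerP (x + k%:~R - astart A) (x + m%:~R - astart B).
  by left; exists (m - k); rewrite intrB; apply/andP; split; lra.
by right; exists (k - m); rewrite intrB; apply/andP; split; lra.
Qed.

Lemma wf_arc_nonwrapping A : wf_arc A -> ~ in_arc A 0 -> nonwrapping_arc A.
Proof.
move=> [/andP[s_ge0 s_lt1] /andP[l_gt0 l_lt1]] A0; split => //.
rewrite ltNge; apply/negP => e_ge1; apply: A0.
by exists 1; rewrite /arc_end in e_ge1 *; apply/andP; split; lra.
Qed.

Lemma in_nonwrapping_arcE A x : nonwrapping_arc A -> circle_pt x ->
  in_arc A x <-> astart A <= x <= arc_end A.
Proof.
move=> [s_ge0 e_lt1] /andP[x_ge0 x_lt1]; split; last by exists 0; rewrite addr0.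
move=> [k /andP[xk_ge xk_le]]; rewrite /arc_end in e_lt1 *.
suff k0 : k = 0 by move: xk_ge xk_le; rewrite k0 addr0 => -> ->.
have k_gtN1 : (-1)%:~R < k%:~R :> R by rewrite intrN; lra.
have k_lt1 : k%:~R < 1%:~R :> R by lra.
by rewrite !ltr_int in k_gtN1 k_lt1; lia.
Qed.

Lemma nonwrapping_arcs_intersect A B : wf_arc A -> wf_arc B ->
  nonwrapping_arc A -> nonwrapping_arc B ->
  arcs_intersect A B <-> astart A <= arc_end B /\ astart B <= arc_end A.
Proof.
move=> [/andP[sA_ge0 sA_lt1] /andP[lA_gt0 _]] [/andP[sB_ge0 sB_lt1] /andP[lB_gt0 _]] nwA nwB.
have inAE := in_nonwrapping_arcE nwA; have inBE := in_nonwrapping_arcE nwB.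
split.
  move=> [x [x_pt [/(inAE _ x_pt)/andP[xA1 xA2] /(inBE _ x_pt)/andP[xB1 xB2]]]].
  by split; lra.
move=> [sA_le sB_le].
suff [x [x_pt [xA xB]]] : exists x, circle_pt x /\
    astart A <= x <= arc_end A /\ astart B <= x <= arc_end B.
  by exists x; rewrite inAE ?inBE.
rewrite /circle_pt /arc_end in sA_le sB_le *.
have [le|lt] := lerP (astart A) (astart B); [exists (astart B) | exists (astart A)];
  by split; [|split]; apply/andP; split; lra.
Qed.

Lemma nonwrapping_arcs_intersect_end A B : wf_arc A -> wf_arc B ->
  nonwrapping_arc A -> nonwrapping_arc B -> arc_end A <= arc_end B ->
  arcs_intersect A B -> in_arc B (arc_end A).
Proof.
move=> wfA wfB nwA nwB eAB /(nonwrapping_arcs_intersect wfA wfB nwA nwB) [_ sB_le].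
by apply/(in_nonwrapping_arcE nwB (nonwrapping_arc_end_pt wfA nwA))/andP.
Qed.

End Arcs.

Section Families.
Variables (R : realType) (n : nat) (I : 'I_n -> circ_arc R).

Lemma leq_independence_number S :
  independent I S -> (#|S| <= independence_number I)%N.
Proof.
by move=> indS; apply: (leq_bigmax_cond (F := fun S : {set _} => #|S|)); apply/asboolP.
Qed.

Lemma independent_set1 i : independent I [set i].
Proof. by move=> j k; rewrite !inE => /eqP-> /eqP->; rewrite eqxx. Qed.

Lemma independentU1 i S : independent I S ->
  (forall j, j \in S -> ~ arcs_intersect (I i) (I j)) -> independent I (i |: S).
Proof.
move=> indS disj j k; rewrite !inE => /predU1P[->|jS] /predU1P[->|kS]; rewrite ?eqxx //.
- by move=> _; apply: disj.
- by move=> _ /arcs_intersect_sym; apply: disj.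
- exact: indS.
Qed.

Lemma num_edges_le_sum_depth :
  (num_edges I <= 2 * \sum_i depth I (astart (I i)))%N.
Proof.
pose P i j := `[< in_arc (I j) (astart (I i)) >].
have -> : (\sum_i depth I (astart (I i)) = #|[set p | P p.1 p.2]|)%N.
  by rewrite card_set_pair_fst.
rewrite mul2n -addnn -[X in (_ <= _ + X)%N](card_set_pair_swap P).
apply: leq_trans (leq_card_setU _ _); apply: subset_leq_card; apply/subsetP => p.
rewrite !inE => /andP[_ /asboolP /arcs_intersect_start[]] start_in.
  by apply/orP; left; apply/asboolP.
by apply/orP; right; apply/asboolP.
Qed.

Lemma card_intersecting_pairs :
  (#|[set p : 'I_n * 'I_n | `[< arcs_intersect (I p.1) (I p.2) >]]|
     <= 2 * num_edges I + n)%N.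
Proof.
pose E (i j : 'I_n) := (i < j)%N && `[< arcs_intersect (I i) (I j) >].
have card_diag : (#|[set (i, i) | i : 'I_n]| <= n)%N.
  by apply: leq_trans (leq_imset_card _ _) _; rewrite ?cardsT card_ord.
rewrite mul2n -addnn -[X in (_ <= _ + X + _)%N](card_set_pair_swap E).
apply: leq_trans (leq_add (leq_card_setU _ _) card_diag).
apply: leq_trans (leq_card_setU _ _); apply: subset_leq_card.
apply/subsetP => -[i j]; rewrite !inE /= => /asboolP ij.
case: (ltngtP i j) => [lt_ij|lt_ji|/val_inj eq_ij].
- by rewrite (asboolT ij).
- by rewrite /E lt_ji (asboolT (arcs_intersect_sym ij)) orbT.
- by apply/orP; right; apply/imsetP; exists i; rewrite ?eq_ij.
Qed.

End Families.

Section DepthBoundedFamilies.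
Variables (R : realType) (n : nat) (I : 'I_n -> circ_arc R) (w : nat).
Hypothesis wfI : forall i, wf_arc (I i).
Hypothesis depthI : forall x, circle_pt x -> (depth I x <= w)%N.

Lemma num_edges_le_depth : (num_edges I <= 2 * n * w)%N.
Proof.
apply: (leq_trans (num_edges_le_sum_depth I)); rewrite -mulnA leq_mul2l orbC.
rewrite -[X in (_ <= X * w)%N]card_ord -sum_nat_const leq_sum // => i _.
exact/depthI/wf_arc_start_pt.
Qed.

Lemma large_independent_subset (S : {set 'I_n}) :
  (forall i, i \in S -> nonwrapping_arc (I i)) ->
  exists2 T : {set 'I_n}, T \subset S /\ independent I T & (#|S| <= w * #|T|)%N.
Proof.
have [m] := ubnP #|S|; elim: m S => // m IH S ltSm nwS.
have [->|/set0Pn[i1 i1S]] := eqVneq S set0.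
  by exists set0; [split; [exact: sub0set | move=> i j; rewrite inE] | rewrite cards0].
have [i0 i0S min_i0] :=
  @arg_minP _ R _ i1 (fun i => i \in S) (fun i => arc_end (I i)) i1S.
pose N := [set j in S | `[< in_arc (I j) (arc_end (I i0)) >]].
have i0N : i0 \in N by rewrite inE i0S; apply/asboolP/in_arc_end.
have cardN : (#|N| <= w)%N.
  apply: leq_trans (depthI (nonwrapping_arc_end_pt (wfI i0) (nwS i0 i0S))).
  by apply/subset_leq_card/subsetP => j; rewrite !inE => /andP[].
have ltSNm : (#|S :\: N| < m)%N.
  rewrite -ltnS (leq_trans _ ltSm) // ltnS.
  apply/proper_card/properP; split; first exact: subsetDl.
  by exists i0; rewrite // inE i0N.
have [|T [TS indT] cardT] := IH (S :\: N) ltSNm.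
  by move=> i /setDP[iS _]; apply: nwS.
have i0_disj j : j \in T -> ~ arcs_intersect (I i0) (I j).
  move=> /(subsetP TS)/setDP[jS]; rewrite inE jS /= => /asboolPn jN meet; apply: jN.
  exact: nonwrapping_arcs_intersect_end (nwS _ i0S) (nwS _ jS) (min_i0 _ jS) meet.
exists (i0 |: T).
  split; last exact: independentU1.
  by rewrite subUset sub1set i0S (subset_trans TS (subsetDl _ _)).
have i0T : i0 \notin T by apply/negP => /(subsetP TS); rewrite inE i0N.
rewrite -(cardsID N S) cardsU1 i0T mulnS leq_add //.
by apply: leq_trans cardN; apply/subset_leq_card/subsetIr.
Qed.

Lemma card_le_depth_independence : (n <= w * (independence_number I).+1)%N.
Proof.
pose Z := [set i | `[< in_arc (I i) 0 >]].
have cardZ : (#|Z| <= w)%N by apply: depthI; rewrite /circle_pt lexx ltr01.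
have [|T [_ indT] cardT] := @large_independent_subset (~: Z).
  by move=> i; rewrite !inE => /asboolPn; apply: wf_arc_nonwrapping.
rewrite -[X in (X <= _)%N]card_ord -(cardsC Z) mulnS leq_add // (leq_trans cardT) //.
by rewrite leq_mul2l leq_independence_number ?orbT.
Qed.

End DepthBoundedFamilies.

Lemma num_edges_le_independence_depth (R : realType) (n : nat)
    (I : 'I_n -> circ_arc R) (alpha omega : nat) :
  (forall i, wf_arc (I i)) -> independence_number I = alpha ->
  is_max_depth I omega -> (num_edges I <= 4 * alpha * omega ^ 2)%N.
Proof.
move=> wfI <- [_ depthI]; have edges_le := num_edges_le_depth wfI depthI.
have [n0|n_gt0] := posnP n.
  have -> : num_edges I = 0%N.
    by apply/eqP; rewrite -leqn0 (leq_trans edges_le) // n0 muln0.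
  by [].
have alpha_gt0 : (0 < independence_number I)%N.
  by rewrite -(cards1 (Ordinal n_gt0)); apply/leq_independence_number/independent_set1.
have := card_le_depth_independence wfI depthI; nia.
Qed.

Section NatFractions.
Variables (R : numFieldType) (N : nat).
Hypothesis N_gt0 : (0 < N)%N.

Lemma ler_nat_div m p : (m%:R / N%:R <= p%:R / N%:R :> R) = (m <= p)%N.
Proof. by rewrite ler_pM2r ?invr_gt0 ?ltr0n // ler_nat. Qed.

Lemma ltr_nat_div1 m : (m%:R / N%:R < 1 :> R) = (m < N)%N.
Proof. by rewrite ltr_pdivrMr ?ltr0n // mul1r ltr_nat. Qed.

End NatFractions.

Section ClusterIndex.
Variables (a w : nat).
Hypothesis w_gt0 : (0 < w)%N.

Fact cluster_subproof (i : 'I_(a * w)) : (i %/ w < a)%N.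
Proof. by rewrite ltn_divLR. Qed.

Fact cluster_index_subproof (g : 'I_a) (k : 'I_w) : (g * w + k < a * w)%N.
Proof. have := ltn_ord g; have := ltn_ord k; nia. Qed.

Definition cluster (i : 'I_(a * w)) : 'I_a := Ordinal (cluster_subproof i).
Definition level (i : 'I_(a * w)) : 'I_w := Ordinal (ltn_pmod i w_gt0).
Definition cluster_index (g : 'I_a) (k : 'I_w) : 'I_(a * w) :=
  Ordinal (cluster_index_subproof g k).

Lemma cluster_indexK k : cancel (cluster_index ^~ k) cluster.
Proof. by move=> g; apply: val_inj; rewrite /= divnMDl // divn_small ?addn0. Qed.

Lemma level_cluster_indexK g : cancel (cluster_index g) level.
Proof. by move=> k; apply: val_inj; rewrite /= modnMDl modn_small. Qed.

Lemma cluster_level_inj i j : cluster i = cluster j -> level i = level j -> i = j.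
Proof.
move=> /(congr1 val) /= eq_div /(congr1 val) /= eq_mod; apply: val_inj.
by rewrite /= (divn_eq i w) (divn_eq j w) eq_div eq_mod.
Qed.

End ClusterIndex.

Section NestedArcs.
Variables (R : realType) (a w : nat).
Hypotheses (a_gt0 : (0 < a)%N) (w_gt0 : (0 < w)%N).

Local Notation d := ((2 * a * w)%:R : R).

Let den_gt0 : (0 < 2 * a * w)%N.
Proof. by rewrite !muln_gt0 a_gt0 w_gt0. Qed.

(* Cluster [g] starts at [g / a] and its arcs have length at most [1 / (2 a)],
   so distinct clusters are disjoint. *)
Definition nested_arc (g k : nat) : circ_arc R :=
  Arc ((2 * w * g)%:R / d) (k.+1%:R / d).

Lemma nested_arc_end g k : arc_end (nested_arc g k) = (2 * w * g + k.+1)%:R / d.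
Proof. by rewrite /arc_end natrD mulrDl. Qed.

Lemma nested_arc_inj g k g' k' :
  nested_arc g k = nested_arc g' k' -> g = g' /\ k = k'.
Proof.
move=> [/eqP start_eq /eqP len_eq].
rewrite eq_le !ler_nat_div // -eqn_leq eqn_pmul2l in start_eq; last by rewrite muln_gt0.
by rewrite eq_le !ler_nat_div // -eqn_leq in len_eq; split; apply/eqP.
Qed.

Section BoundedIndices.
Variables (g k : nat).
Hypotheses (g_lt : (g < a)%N) (k_lt : (k < w)%N).

Lemma wf_nested_arc : wf_arc (nested_arc g k).
Proof.
rewrite /wf_arc /= !ltr_nat_div1 // divr_ge0 ?divr_gt0 ?ler0n ?ltr0n //=.
by split; nia.
Qed.

Lemma nonwrapping_nested_arc : nonwrapping_arc (nested_arc g k).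
Proof.
rewrite /nonwrapping_arc nested_arc_end ltr_nat_div1 // divr_ge0 ?ler0n //.
by split => //; nia.
Qed.

End BoundedIndices.

Lemma nested_arc_start_le g g' k' : (k' < w)%N ->
  (2 * w * g <= 2 * w * g' + k'.+1)%N = (g <= g')%N.
Proof. by move=> k'_lt; apply/idP/idP => le; nia. Qed.

Lemma nested_arcs_intersect g k g' k' :
  (g < a)%N -> (k < w)%N -> (g' < a)%N -> (k' < w)%N ->
  arcs_intersect (nested_arc g k) (nested_arc g' k') <-> g = g'.
Proof.
move=> g_lt k_lt g'_lt k'_lt.
rewrite (nonwrapping_arcs_intersect (wf_nested_arc g_lt k_lt) (wf_nested_arc g'_lt k'_lt)
  (nonwrapping_nested_arc g_lt k_lt) (nonwrapping_nested_arc g'_lt k'_lt)).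
rewrite !nested_arc_end /= !ler_nat_div // !nested_arc_start_le //.
split=> [[le le']|->]; last by split.
by apply/eqP; rewrite eqn_leq le le'.
Qed.

Lemma in_nested_arc0 k : in_arc (nested_arc 0 k) 0.
Proof. by exists 0; rewrite /= muln0 mul0r !add0r lexx divr_ge0 ?ler0n. Qed.

Definition nested_family (i : 'I_(a * w)) : circ_arc R :=
  nested_arc (cluster w_gt0 i) (level w_gt0 i).

Local Notation F := nested_family.

Lemma nested_family_intersect i j :
  arcs_intersect (F i) (F j) <-> cluster w_gt0 i = cluster w_gt0 j.
Proof.
rewrite nested_arcs_intersect ?ltn_ord //.
by split => [/val_inj|->].
Qed.

Lemma nested_family_inj : injective F.
Proof.
by move=> i j /nested_arc_inj[/val_inj eq_cl /val_inj eq_lv]; apply: cluster_level_inj.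
Qed.

Lemma wf_nested_family i : wf_arc (F i).
Proof. exact/wf_nested_arc/ltn_ord/ltn_ord. Qed.

Lemma depth_nested_family_le x : circle_pt x -> (depth F x <= w)%N.
Proof.
move=> x_pt; rewrite /depth -[X in (_ <= X)%N]card_ord.
apply: (@leq_card_in _ _ (level w_gt0)) => i j; rewrite !inE => /asboolP xi /asboolP xj.
by apply: cluster_level_inj; apply/nested_family_intersect; exists x.
Qed.

Lemma is_max_depth_nested_family : is_max_depth F w.
Proof.
have zero_pt : circle_pt (0 : R) by rewrite /circle_pt lexx ltr01.
split; last exact: depth_nested_family_le.
exists 0; split => //; apply/eqP; rewrite eqn_leq depth_nested_family_le //=.
pose g0 : 'I_a := Ordinal a_gt0.
have inj := can_inj (level_cluster_indexK w_gt0 g0).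
rewrite -[X in (X <= _)%N](card_ord w) -cardsT -(card_imset _ inj).
apply/subset_leq_card/subsetP => _ /imsetP[k _ ->]; rewrite inE; apply/asboolP.
by rewrite /nested_family cluster_indexK; apply: in_nested_arc0.
Qed.

Lemma independence_number_nested_family : independence_number F = a.
Proof.
apply/eqP; rewrite eqn_leq; apply/andP; split.
  apply/bigmax_leqP => S /asboolP indS; rewrite -[X in (_ <= X)%N]card_ord.
  apply: (@leq_card_in _ _ (cluster w_gt0)) => i j iS jS eq_cl.
  by apply/eqP/negPn/negP => neq; apply: indS iS jS neq _; apply/nested_family_intersect.
pose k0 : 'I_w := Ordinal w_gt0.
have inj := can_inj (@cluster_indexK a w w_gt0 k0).
rewrite -[X in (X <= _)%N](card_ord a) -cardsT -(card_imset _ inj).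
apply: leq_independence_number => _ _ /imsetP[g _ ->] /imsetP[g' _ ->] neq.
by move/nested_family_intersect; rewrite !cluster_indexK => eq_g; rewrite eq_g eqxx in neq.
Qed.

Lemma card_intersecting_pairs_nested_family :
  (a * w * w <= #|[set p | `[< arcs_intersect (F p.1) (F p.2) >]]|)%N.
Proof.
pose f (t : 'I_a * ('I_w * 'I_w)) :=
  (cluster_index w_gt0 t.1 t.2.1, cluster_index w_gt0 t.1 t.2.2).
have f_inj : injective f.
  move=> [g [k l]] [g' [k' l']] eq_f.
  have /= eq_k := congr1 fst eq_f; have /= eq_l := congr1 snd eq_f.
  have := congr1 (cluster w_gt0) eq_k; rewrite !cluster_indexK => eq_g; subst g'.
  have := congr1 (level w_gt0) eq_k; rewrite !level_cluster_indexK => ->.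
  by have := congr1 (level w_gt0) eq_l; rewrite !level_cluster_indexK => ->.
have card_dom : #|{: 'I_a * ('I_w * 'I_w)}| = (a * w * w)%N.
  by rewrite !card_prod !card_ord mulnA.
rewrite -card_dom -cardsT -(card_imset _ f_inj).
apply/subset_leq_card/subsetP => _ /imsetP[[g [k l]] _ ->].
by rewrite inE; apply/asboolP/nested_family_intersect; rewrite !cluster_indexK.
Qed.

Lemma nested_family_num_edges : (1 < w)%N -> (a * w ^ 2 <= 4 * num_edges F)%N.
Proof.
move=> w_gt1.
have := leq_trans card_intersecting_pairs_nested_family (card_intersecting_pairs F).
have : (a * w * 2 <= a * w * w)%N by rewrite leq_mul2l w_gt1 orbT.
by rewrite expnS expn1 mulnA; lia.
Qed.

End NestedArcs.

Theorem lemma2p4 :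
  (* upper bound: |E| = O(alpha * omega^2) *)
  (exists C : nat, forall (R : realType) (n : nat) (I : 'I_n -> circ_arc R)
      (alpha omega : nat),
      (forall i, wf_arc (I i)) ->
      independence_number I = alpha ->
      is_max_depth I omega ->
      (num_edges I <= C * alpha * omega ^ 2)%N)
  /\
  (* tightness: families with Omega(alpha * omega^2) edges *)
  (exists c : nat, (0 < c)%N /\
     forall (R : realType) (alpha omega : nat), (0 < alpha)%N -> (1 < omega)%N ->
       exists (n : nat) (I : 'I_n -> circ_arc R),
         injective I /\ (forall i, wf_arc (I i)) /\
         independence_number I = alpha /\ is_max_depth I omega /\
         (alpha * omega ^ 2 <= c * num_edges I)%N).
Proof.
split; first by exists 4 => R n I alpha omega; apply: num_edges_le_independence_depth.
exists 4; split => // R alpha omega alpha_gt0 omega_gt1.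
have omega_gt0 := ltnW omega_gt1.
exists (alpha * omega)%N, (nested_family R (a:=alpha) omega_gt0).
split; first exact: nested_family_inj.
split; first exact: wf_nested_family.
split; first exact: independence_number_nested_family.
split; first exact: is_max_depth_nested_family.
exact: nested_family_num_edges.
Qed.
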